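(* Let $I$ be a finite index set of users. For each $i \in I$ let $p_i \in [0,1]$, $\Delta p_i \in \mathbb{R}$ with $p_i - \Delta p_i \in [0,1]$, and $a_i \in [0,1]$. Let $\mathrm{CPA} > 0$ and $\beta > 0$, and define $$J = \{ i \in I : \mathrm{CPA}\, p_i a_i > \beta \Delta p_i \}, \qquad K = \{ i \in I : \mathrm{CPA}\, p_i a_i < \beta \Delta p_i \}.$$ Assume it is not the case that $\mathrm{CPA}\, p_i a_i = \beta \Delta p_i$ for all $i \in I$. Suppose that $\sum_{j \in J} p_j a_j = \sum_{k \in K} p_k a_k$ and that this common value is positive. Define $$\mathscr{C}_1 = \frac{\sum_{j\in J} \beta \Delta p_j}{\sum_{j\in J} p_j a_j}, \qquad \mathscr{C}_2 = \frac{\sum_{k\in K} \mathrm{CPA}\, p_k a_k}{\sum_{k \in K} p_k a_k}.$$ Then $\mathscr{C}_1 < \mathscr{C}_2$.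
   Context: Interpretation (real-time bidding for online ads): each $i\in I$ indexes an ad request from a distinct user $u_i$; $p_i$ is the action rate if the advertiser's ad is shown, $p_i-\Delta p_i$ the background action rate if it is not shown, $\Delta p_i$ the AR lift, and $a_i$ the probability that an action from $u_i$ is attributed to the DSP that wins $u_i$. $\mathrm{CPA}$ is the advertiser's cost per action. In pure second-price auctions with no other candidates, $DSP_1$ bids $\mathrm{CPA}\, p_i a_i$ and $DSP_2$ bids $\beta\Delta p_i$; $DSP_1$ wins users in $J$ paying $\beta\Delta p_j$ each, $DSP_2$ wins users in $K$ paying $\mathrm{CPA}\,p_k a_k$ each. The expected attributed actions are $\sum_J p_j a_j$ and $\sum_K p_k a_k$ (assumed equal). $\mathscr{C}_1,\mathscr{C}_2$ are the costs per attributed action of $DSP_1$ and $DSP_2$. The excluded case is $a_i = \frac{\beta}{\mathrm{CPA}}\cdot\frac{\Delta p_i}{p_i}$ for all $i$, i.e. both DSPs always bid the same price. *)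

From mathcomp Require Import all_boot all_order all_algebra.
Set Implicit Arguments. Unset Strict Implicit. Unset Printing Implicit Defensive.
Import Order.TTheory GRing.Theory Num.Theory.
Local Open Scope ring_scope.

Definition setJ (R : realFieldType) (I : finType) (CPA beta : R) (p dp a : I -> R) : {set I} :=
  [set i | beta * dp i < CPA * p i * a i].
Definition setK (R : realFieldType) (I : finType) (CPA beta : R) (p dp a : I -> R) : {set I} :=
  [set i | CPA * p i * a i < beta * dp i].

Definition cost1 (R : realFieldType) (I : finType) (CPA beta : R) (p dp a : I -> R) : R :=
  (\sum_(j in setJ CPA beta p dp a) beta * dp j) / (\sum_(j in setJ CPA beta p dp a) p j * a j).
Definition cost2 (R : realFieldType) (I : finType) (CPA beta : R) (p dp a : I -> R) : R :=
  (\sum_(k in setK CPA beta p dp a) CPA * p k * a k) / (\sum_(k in setK CPA beta p dp a) p k * a k).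

(** Since [CPA p_k a_k] is proportional to [p_k a_k], DSP_2's cost per
    attributed action is exactly [CPA].  On [J] each payment [beta dp_j] is
    strictly below [CPA p_j a_j], and [J] is nonempty because its attributed
    actions have positive total, so DSP_1's cost per action is below [CPA]. *)

From mathcomp Require Import all_boot all_order all_algebra.
Set Implicit Arguments. Unset Strict Implicit.
Import Order.TTheory GRing.Theory Num.Theory.
Local Open Scope ring_scope.

Section WeightedRatios.
Variables (R : realFieldType) (I : eqType) (r : seq I) (P : pred I).

Lemma sum_scaled_ratio (c : R) (f : I -> R) :
  \sum_(i <- r | P i) f i != 0 ->
  (\sum_(i <- r | P i) c * f i) / \sum_(i <- r | P i) f i = c.
Proof. by move=> nz_f; rewrite -mulr_sumr mulfK. Qed.

Lemma sum_ratio_lt (c : R) (f g : I -> R) :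
  0 < \sum_(i <- r | P i) f i ->
  (forall i, P i -> g i < c * f i) ->
  (\sum_(i <- r | P i) g i) / \sum_(i <- r | P i) f i < c.
Proof.
move=> f_gt0 lt_gcf; rewrite ltr_pdivrMr // mulr_sumr.
have hasPr : has P r.
  by apply: contraTT f_gt0 => noP; rewrite big_hasC ?ltxx.
exact: ltr_sum.
Qed.

End WeightedRatios.

Section Costs.
Variables (R : realFieldType) (I : finType) (p dp a : I -> R) (CPA beta : R).

Lemma cost2_eq_CPA :
  \sum_(k in setK CPA beta p dp a) p k * a k != 0 -> cost2 CPA beta p dp a = CPA.
Proof.
move=> nz_K; rewrite /cost2 -[RHS](sum_scaled_ratio CPA nz_K).
by congr (_ / _); apply: eq_bigr => k _; rewrite mulrA.
Qed.

Lemma cost1_lt_CPA :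
  0 < \sum_(j in setJ CPA beta p dp a) p j * a j -> cost1 CPA beta p dp a < CPA.
Proof.
move=> J_gt0; apply: sum_ratio_lt => // j.
by rewrite inE mulrA.
Qed.

End Costs.

Theorem theorem4 (R : realFieldType) (I : finType) (p dp a : I -> R) (CPA beta : R)
  (hp : forall i, 0 <= p i <= 1)
  (hdp : forall i, 0 <= p i - dp i <= 1)
  (ha : forall i, 0 <= a i <= 1)
  (hCPA : 0 < CPA) (hbeta : 0 < beta)
  (hnot : ~ (forall i, CPA * p i * a i = beta * dp i))
  (heq : \sum_(j in setJ CPA beta p dp a) p j * a j
         = \sum_(k in setK CPA beta p dp a) p k * a k)
  (hpos : 0 < \sum_(j in setJ CPA beta p dp a) p j * a j) :
  cost1 CPA beta p dp a < cost2 CPA beta p dp a.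
Proof.
rewrite cost2_eq_CPA; first exact: cost1_lt_CPA.
by rewrite -heq gt_eqF.
Qed.
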